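(* Let $f\colon\mathbb{R}\to\mathbb{R}$ be a nonnegative Borel-measurable function such that $f(x)=0$ if and only if $x=0$. Define \[ c_f:=\sup\Big\{\frac{af(b)+bf(-a)}{af(b-t)+bf(-a-t)}\colon a\in(0,\infty),\ b\in(0,\infty),\ t\in\mathbb{R}\Big\}\in(0,\infty]. \] Then for every real-valued random variable $X$ with a finite mean $\mathsf{E}X$, \[ \mathsf{E} f(X-\mathsf{E} X)\le c_f\,\mathsf{E} f(X), \] and $c_f$ is the best possible constant factor in this inequality over all random variables $X$ with a finite mean (i.e., for every constant $c<c_f$ there exists a random variable $X$ with finite mean such that $\mathsf{E} f(X-\mathsf{E} X)> c\,\mathsf{E} f(X)$).
   Context: For $a,b>0$ and $t\in\mathbb{R}$ both numerator and denominator of the ratio in the definition of $c_f$ are strictly positive, so $c_f$ is well defined with values in $(0,\infty]$. *)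

From HB Require Import structures.
From mathcomp Require Import all_boot all_order all_algebra.
From mathcomp Require Import all_classical all_reals all_analysis.
Set Implicit Arguments. Unset Strict Implicit. Unset Printing Implicit Defensive.
Import Order.TTheory GRing.Theory Num.Theory.
Local Open Scope ring_scope.
Local Open Scope classical_set_scope.

Definition cf_ratio {R : realType} (f : R -> R) (a b t : R) : R :=
  (a * f b + b * f (- a)) / (a * f (b - t) + b * f (- a - t)).

Definition c_f {R : realType} (f : R -> R) : \bar R :=
  ereal_sup [set y : \bar R | exists a b t : R,
               (0 < a)%R /\ (0 < b)%R /\ y = (cf_ratio f a b t)%:E].

From HB Require Import structures.
From mathcomp Require Import all_boot all_order all_algebra.
From mathcomp Require Import all_classical all_reals all_analysis.
From mathcomp Require Import ring lra measurable_realfun.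
Import Order.TTheory GRing.Theory Num.Theory.
Local Open Scope ring_scope.
Local Open Scope classical_set_scope.

(* Suppose c := c_f f is finite and let m be a real shift.  The ratio bound
   for t = - m, divided by a * b, says that every chord slope of
   g y := f y - c * f (y + m) to the right of 0 is at most every chord slope
   to the left of 0; as g 0 <= 0, g lies below a line y |-> l * y.  For m the
   mean of X this gives f (X - m) <= c * f X + l * (X - m), whose linear term
   has expectation 0.  When c_f f = +oo the inequality only has content if
   E f(X) = 0, and then X = 0 almost surely. *)

Lemma linear_majorant_of_slopes {R : realType} (g : R -> R) :
  g 0 <= 0 -> (forall a b, 0 < a -> 0 < b -> g b / b <= - g (- a) / a) ->
  exists l, forall y, g y <= l * y.
Proof.
move=> g0 slopes.
pose S := [set z | exists2 y, 0 < y & z = g y / y].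
have S_sup : has_sup S.
  split; first by exists (g 1 / 1); exists 1.
  by exists (- g (- 1) / 1) => _ [b b0 ->]; exact: slopes.
exists (sup S) => y.
have [y_lt0|y_gt0|->] := ltrgtP y 0; last by rewrite mulr0.
- have ny_gt0 : 0 < - y by rewrite oppr_gt0.
  have : sup S <= - g (- - y) / - y.
    by apply: ge_sup; [case: S_sup | move=> _ [b b0 ->]; exact: slopes].
  rewrite opprK ler_pdivlMr // => h; nra.
- have : g y / y <= sup S by apply: sup_upper_bound => //; exists y.
  by rewrite ler_pdivrMr.
Qed.

Section c_f_properties.
Context {R : realType} {f : R -> R}.
Hypotheses (f_ge0 : forall x, 0 <= f x) (f_eq0 : forall x, f x = 0 <-> x = 0).

Lemma f_gt0 x : x != 0 -> 0 < f x.
Proof. by move=> x0; rewrite lt0r f_ge0 andbT; apply: contra x0 => /eqP/f_eq0->. Qed.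

Lemma cf_ratio_denom_gt0 a b t : 0 < a -> 0 < b ->
  0 < a * f (b - t) + b * f (- a - t).
Proof.
move=> a0 b0; have [bt0|bt0] := eqVneq (b - t) 0.
- have : - a - t != 0 by apply/eqP; move/eqP: bt0; lra.
  by move=> /f_gt0 fat; have := f_ge0 (b - t); nra.
- by move: bt0 => /f_gt0 fbt; have := f_ge0 (- a - t); nra.
Qed.

Lemma cf_ratio_le_c_f a b t : 0 < a -> 0 < b -> ((cf_ratio f a b t)%:E <= c_f f)%E.
Proof. by move=> a0 b0; apply: ereal_sup_ubound; exists a, b, t. Qed.

Lemma c_f_ge1 : (1%:E <= c_f f)%E.
Proof.
have := cf_ratio_le_c_f 1 1 0 ltr01 ltr01.
rewrite /cf_ratio !subr0 !mul1r divff // gt_eqF //.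
by have := cf_ratio_denom_gt0 1 1 0 ltr01 ltr01; rewrite !subr0 !mul1r.
Qed.

Lemma c_f_shift_majorant c m : c_f f = c%:E ->
  exists l, forall y, f y <= c * f (y + m) + l * y.
Proof.
move=> cfE; have c_ge1 : 1 <= c by rewrite -lee_fin -cfE c_f_ge1.
pose g y := f y - c * f (y + m).
suff [l gl] : exists l, forall y, g y <= l * y.
  by exists l => y; have := gl y; rewrite /g; lra.
apply: linear_majorant_of_slopes => [|a b a0 b0].
  by rewrite /g add0r (proj2 (f_eq0 0)) //; have := f_ge0 m; nra.
have := cf_ratio_le_c_f a b (- m) a0 b0.
rewrite cfE lee_fin /cf_ratio !opprK ler_pdivrMr; last first.
  by have := cf_ratio_denom_gt0 a b (- m) a0 b0; rewrite !opprK.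
rewrite ler_pdivrMr // mulrAC ler_pdivlMr // /g => ratio; nra.
Qed.

End c_f_properties.

Section expectation_shift.
Local Open Scope ereal_scope.
Context {d} {T : measurableType d} {R : realType} {P : probability T R}.
Context {X : {RV P >-> R}} {m : R}.
Hypotheses (X_int : P.-integrable setT (EFin \o X)) (EX : 'E_P[X] = m%:E).
Context {f : R -> R}.
Hypotheses (mf : measurable_fun setT f) (f_ge0 : forall x, (0 <= f x)%R).

Let mfX : measurable_fun setT (fun w => f (X w)).
Proof. exact: measurableT_comp. Qed.

Let mfXm : measurable_fun setT (fun w => f (X w - m)%R).
Proof. by apply: measurableT_comp => //; apply: measurable_funB. Qed.

Lemma expectation_shift_le_of_majorant (c l : R) : (0 < c)%R ->
  (forall y, f (y - m) <= c * f y + l * (y - m))%R ->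
  'E_P[fun w => f (X w - m)%R] <= c%:E * 'E_P[fun w => f (X w)].
Proof.
move=> c0 maj.
have [->|EfX_fin] := eqVneq 'E_P[fun w => f (X w)] +oo.
  by rewrite gt0_muley ?lte_fin // leey.
have XL : (X : T -> R) \in Lfun P 1 by apply/Lfun1_integrable.
have fXL : (fun w => f (X w)) \in Lfun P 1.
  apply/Lfun1_integrable/integrableP; split; first exact/measurable_EFinP.
  under eq_integral do rewrite gee0_abs ?lee_fin //.
  by rewrite ltey; move: EfX_fin; rewrite unlock.
have XmL : (X \- cst m)%R \in Lfun P 1 by rewrite rpredB // Lfun_cst.
pose Y := ((c \o* fun w => f (X w)) \+ (l \o* (X \- cst m)))%R.
have majY w : (f (X w - m) <= Y w)%R.
  by rewrite /Y /= mulrC [(_ * l)%R]mulrC; exact: maj.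
have YE : 'E_P[Y] = c%:E * 'E_P[fun w => f (X w)].
  rewrite expectationD ?Lfun_scale // !expectationZl // expectationB ?Lfun_cst //.
  by rewrite EX expectation_cst subee // mule0 adde0.
rewrite -YE; apply: expectation_le => //.
- by apply: measurable_funD; apply: measurable_funM => //; apply: measurable_funB.
- by move=> w; apply: le_trans (majY w).
- exact: aeW.
Qed.

Lemma expectation_shift_eq0 : (forall x, f x = 0 -> x = 0)%R ->
  'E_P[fun w => f (X w)] = 0 -> 'E_P[fun w => f (X w - m)%R] = 0.
Proof.
move=> f0_eq0 EfX0.
have X_ae0 : ae_eq P setT (EFin \o X) (cst 0).
  have : ae_eq P setT (fun w => (f (X w))%:E) (cst 0).
    apply/(ae_eq_integral_abs _ measurableT); first exact/measurable_EFinP.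
    under eq_integral do rewrite gee0_abs ?lee_fin //.
    by move: EfX0; rewrite unlock.
  by apply: filterS => w fX0 Tw; case: (fX0 Tw) => /f0_eq0 /= ->.
have m0 : m = 0%R.
  apply: EFin_inj; rewrite -EX unlock (ae_eq_integral (cst 0)) //.
  - exact: integral0.
  - exact/measurable_EFinP.
suff -> : (fun w => f (X w - m)%R) = (fun w => f (X w)) by [].
by apply: funext => w; rewrite m0 subr0.
Qed.

End expectation_shift.

Local Open Scope ereal_scope.
Local Open Scope ring_scope.

Lemma expectation_centered_le_c_f {R : realType} (f : R -> R) :
  measurable_fun setT f -> (forall x, 0 <= f x) -> (forall x, f x = 0 <-> x = 0) ->
  forall d (T : measurableType d) (P : probability T R) (X : {RV P >-> R}),
  P.-integrable setT (EFin \o X) ->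
  ('E_P[fun w => f (X w - fine 'E_P[X])%R] <= c_f f * 'E_P[fun w => f (X w)])%E.
Proof.
move=> mf f_ge0 f_eq0 d T P X X_int; set m := fine 'E_P[X].
have EX : 'E_P[X] = m%:E by rewrite fineK // expectation_def integrable_fin_num.
case cfE : (c_f f) (c_f_ge1 f_ge0 f_eq0) => [c| |] // c_ge1.
- have c_gt0 : 0 < c by rewrite lee_fin in c_ge1; lra.
  have [l maj] := c_f_shift_majorant f_ge0 f_eq0 c m cfE.
  apply: (expectation_shift_le_of_majorant X_int EX mf f_ge0 c l c_gt0) => y.
  by have := maj (y - m); rewrite subrK.
- have := expectation_ge0 P (fun w => f_ge0 (X w)).
  rewrite le_eqVlt => /orP[/eqP EfX0|EfX_gt0].
  + by rewrite -EfX0 mule0 (expectation_shift_eq0 EX) // => x /f_eq0.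
  + by rewrite gt0_mulye // leey.
Qed.

Definition two_point {R : realType} (x y : R) (b : bool) : R := if b then x else y.

Lemma measurable_two_point {R : realType} (x y : R) :
  measurable_fun setT (two_point x y).
Proof. by []. Qed.

HB.instance Definition _ (R : realType) (x y : R) :=
  isMeasurableFun.Build _ _ _ _ (two_point x y) (measurable_two_point x y).

Section bernoulli_expectation.
Context {R : realType} (p : R).
Hypothesis p01 : 0 <= p <= 1.

Lemma bernoulli_integrable (h : bool -> R) :
  (bernoulli_prob p).-integrable setT (EFin \o h).
Proof.
apply/integrableP; split; first by [].
by rewrite integral_bernoulli_prob //= -!EFinM -EFinD ltry.
Qed.

(* [integral_bernoulli_prob] needs a nonnegative integrand, so [h] is first
   shifted by a constant. *)
Lemma expectation_bernoulli (h : bool -> R) :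
  'E_(bernoulli_prob p)[h] = (p * h true + (1 - p) * h false)%:E.
Proof.
pose s := `|h true| + `|h false|.
have hs_ge0 b : 0 <= h b + s.
  have := lerNnormlW (lexx `|h true|); have := lerNnormlW (lexx `|h false|).
  by case: b; rewrite /s; have := normr_ge0 (h true); have := normr_ge0 (h false); lra.
have L g : (g : bool -> R) \in Lfun (bernoulli_prob p) 1.
  exact/Lfun1_integrable/bernoulli_integrable.
have -> : h = (h \+ cst s) \- cst s by apply: funext => b /=; rewrite addrK.
rewrite expectationB // expectation_cst unlock integral_bernoulli_prob //=.
by rewrite -!EFinM -!EFinD; congr EFin; rewrite /unstable.onem; ring.
Qed.

End bernoulli_expectation.

(* The ratio for [a, b, t] is attained by [X = Y - t] with [Y] the centred
   two-point variable taking [b] with probability [a / (a + b)] and [- a]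
   otherwise. *)
Lemma c_f_sharp {R : realType} (f : R -> R) :
  (forall x, 0 <= f x) -> (forall x, f x = 0 <-> x = 0) ->
  forall c : R, (c%:E < c_f f)%E ->
  exists d (T : measurableType d) (P : probability T R) (X : {RV P >-> R}),
    P.-integrable setT (EFin \o X) /\
    (c%:E * 'E_P[fun w => f (X w)] < 'E_P[fun w => f (X w - fine 'E_P[X])%R])%E.
Proof.
move=> f_ge0 f_eq0 c /ereal_sup_gt [_ [a [b [t [a0 [b0 ->]]]]]].
rewrite lte_fin => c_lt.
have ab0 : 0 < a + b by lra.
pose p := a / (a + b).
have p01 : 0 <= p <= 1.
  by rewrite /p divr_ge0 ?(ltW a0) ?(ltW ab0) //= ler_pdivrMr // mul1r lerDl ltW.
have mix u v : p * u + (1 - p) * v = (a * u + b * v) / (a + b).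
  by rewrite /p; field; rewrite lt0r_neq0.
exists _, bool, (bernoulli_prob p), (two_point (b - t) (- a - t)).
split; first exact: bernoulli_integrable.
have mean : (a * (b - t) + b * (- a - t)) / (a + b) = - t.
  by field; rewrite lt0r_neq0.
rewrite !expectation_bernoulli //= !mix mean opprK !subrK lte_fin.
by rewrite mulrA ltr_pM2r ?invr_gt0 // -ltr_pdivlMr ?cf_ratio_denom_gt0.
Qed.

Local Open Scope ereal_scope.

Theorem theorem2p1 (R : realType) (f : R -> R) :
  measurable_fun setT f ->
  (forall x, 0 <= f x)%R ->
  (forall x, f x = 0 <-> x = 0)%R ->
  (forall (d : measure_display) (T : measurableType d) (P : probability T R)
          (X : {RV P >-> R}),
     P.-integrable setT (EFin \o X) ->
     'E_P[fun w => f (X w - fine 'E_P[X])%R] <= c_f f * 'E_P[fun w => f (X w)])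
  /\
  (forall c : R, c%:E < c_f f ->
     exists (d : measure_display) (T : measurableType d) (P : probability T R)
            (X : {RV P >-> R}),
       P.-integrable setT (EFin \o X) /\
       c%:E * 'E_P[fun w => f (X w)] < 'E_P[fun w => f (X w - fine 'E_P[X])%R]).
Proof.
move=> mf f_ge0 f_eq0; split.
- exact: expectation_centered_le_c_f.
- exact: c_f_sharp.
Qed.
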